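(* Let $n\ge2$, $d_1,\dots,d_n\ge2$, and let $\rho$ be a fully separable state on $\mathbb{C}^{d_1}\otimes\cdots\otimes\mathbb{C}^{d_n}$ with correlation tensor $\mathcal T$ and canonical correlation tensor $\tilde{\mathcal T}$ (defined in the context), and with moments $\bar a_i$, $\bar b_i$ as defined in the context. Then \[ \bar a_2^2\le \bar a_3\prod_{k=1}^n\sqrt{\frac{d_k-1}{2d_k}},\qquad \bar b_2^2\le \bar b_3\prod_{k=1}^n\sqrt{\frac{d_k^2-d_k+2}{2d_k^2}} . \]
   Context: For $d\ge2$, $\lambda_1^{(d)},\dots,\lambda_{d^2-1}^{(d)}$ are traceless Hermitian generators of $\mathfrak{su}(d)$ with ${\rm Tr}(\lambda_i\lambda_j)=2\delta_{ij}$, and set $\lambda_0^{(d)}=I_d$. For a multi-index $\alpha=(\alpha_1,\dots,\alpha_n)$ with $\alpha_k\in\{0,1,\dots,d_k^2-1\}$, let $m(\alpha)$ be the number of $k$ with $\alpha_k\neq0$, and define $\tilde{\mathcal T}_{\alpha_1\cdots\alpha_n}=\frac{\prod_{k:\alpha_k\ne0}d_k}{2^{m(\alpha)}\prod_{k=1}^n d_k}{\rm Tr}\big(\rho\,\lambda_{\alpha_1}^{(d_1)}\otimes\cdots\otimes\lambda_{\alpha_n}^{(d_n)}\big)$ (so $\tilde{\mathcal T}_{0\cdots0}=1/\prod_k d_k$ and $\rho=\sum_\alpha\tilde{\mathcal T}_\alpha\lambda_{\alpha_1}^{(d_1)}\otimes\cdots\otimes\lambda_{\alpha_n}^{(d_n)}$).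 The canonical correlation tensor is $\tilde{\mathcal T}$ (indices $\alpha_k\in\{0,\dots,d_k^2-1\}$) and the correlation tensor $\mathcal T$ is its restriction to $\alpha_k\in\{1,\dots,d_k^2-1\}$ for all $k$, i.e. $\mathcal T_{\alpha_1\cdots\alpha_n}=2^{-n}{\rm Tr}(\rho\,\lambda_{\alpha_1}\otimes\cdots\otimes\lambda_{\alpha_n})$. The $k$-th unfolding $\mathcal X_k$ of an $n$-index tensor $\mathcal X$ is the matrix with row index the $k$-th index and column index running over all remaining indices. The moments are $\bar a_i=\max_{1\le k\le n}{\rm Tr}\big((\mathcal T_k\mathcal T_k^{\dagger})^{i/2}\big)$ and $\bar b_i=\max_{1\le k\le n}{\rm Tr}\big((\tilde{\mathcal T}_k\tilde{\mathcal T}_k^{\dagger})^{i/2}\big)$, i.e. $\bar a_i=\|\mathcal T\|_i^i$, $\bar b_i=\|\tilde{\mathcal T}\|_i^i$ where the Schatten-$p$ norm of a tensor is the maximum of the Schatten-$p$ norms of its unfoldings. A state is fully separable if it is a convex combination $\sum_ip_i\rho_i^{(1)}\otimes\cdots\otimes\rho_i^{(n)}$ of product states. *)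

(* Complex scalars: an arbitrary numClosedFieldType C
   (e.g. complex numbers over a real closed field). *)
From HB Require Import structures.
From mathcomp Require Import all_boot all_order all_algebra.
Set Implicit Arguments. Unset Strict Implicit. Unset Printing Implicit Defensive.
Import Order.TTheory GRing.Theory Num.Theory.
Local Open Scope ring_scope.

Section Defs.
Variable C : numClosedFieldType.

Definition adj m p (M : 'M[C]_(m, p)) : 'M[C]_(p, m) := (map_mx Num.conj M)^T.

Definition psd m (A : 'M[C]_m) : Prop :=
  adj A = A /\ forall v : 'rV[C]_m, 0 <= (v *m A *m adj v) 0 0.
Definition density m (A : 'M[C]_m) : Prop := psd A /\ \tr A = 1.

Definition su_generators (d : nat) (L : nat -> 'M[C]_d) : Prop :=
  L 0%N = 1%:M /\
  (forall a, (1 <= a < d ^ 2)%N -> adj (L a) = L a /\ \tr (L a) = 0) /\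
  (forall a b, (1 <= a < d ^ 2)%N -> (1 <= b < d ^ 2)%N ->
     \tr (L a *m L b) = (a == b)%:R *+ 2).

Variable n : nat.

Definition MIdx (e : 'I_n -> nat) := {dffun forall k : 'I_n, 'I_(e k)}.

Section Space.
Variable d : 'I_n -> nat.
(* computational basis of C^{d_1} (x) ... (x) C^{d_n}, indexed by MIdx d,
   enumerated via enum_val *)
Definition dimH := #|{: MIdx d}|.
Definition bas (i : 'I_dimH) : MIdx d := enum_val i.

Definition tens (A : forall k : 'I_n, 'M[C]_(d k)) : 'M[C]_dimH :=
  \matrix_(i, j) \prod_(k < n) A k (bas i k) (bas j k).

Definition product_state (A : forall k : 'I_n, 'M[C]_(d k)) : Prop :=
  forall k, density (A k).

Definition fully_separable (rho : 'M[C]_dimH) : Prop :=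
  exists (m : nat) (p : 'I_m -> C) (sig : 'I_m -> forall k : 'I_n, 'M[C]_(d k)),
    [/\ forall i, 0 <= p i, \sum_(i < m) p i = 1,
        forall i, product_state (sig i) &
        rho = \sum_(i < m) p i *: tens (sig i)].

Variable L : forall k : 'I_n, nat -> 'M[C]_(d k).

Definition canon_corr (rho : 'M[C]_dimH) (al : MIdx (fun k => d k ^ 2)%N) : C :=
  (\prod_(k < n | val (al k) != 0%N) (d k)%:R)
  / (2 ^+ #|[pred k | val (al k) != 0%N]| * \prod_(k < n) (d k)%:R)
  * \tr (rho *m tens (fun k => L k (val (al k)))).

(* correlation tensor, indices alpha_k in {1, ..., d_k^2 - 1}
   (stored shifted by one: index a : 'I_(d_k^2-1) stands for a+1) *)
Definition corr (rho : 'M[C]_dimH) (al : MIdx (fun k => d k ^ 2 - 1)%N) : C :=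
  (2 ^+ n)^-1 * \tr (rho *m tens (fun k => L k (val (al k)).+1)).
End Space.

(* X_k X_k^dagger for the k-th unfolding X_k of a tensor X *)
Definition unfold_gram (e : 'I_n -> nat) (X : MIdx e -> C) (k : 'I_n)
  : 'M[C]_(e k) :=
  \matrix_(a, b) \sum_(be : MIdx e) \sum_(ga : MIdx e)
     (if [&& be k == a, ga k == b & [forall j, (j != k) ==> (be j == ga j)]]
      then X be * Num.conj (X ga) else 0).

(* Tr (G^{p/2}) for a positive semidefinite G: sum of eigenvalues^(p/2) *)
Definition trpow_half (p : nat) r (G : 'M[C]_r) : C :=
  \sum_(j < r) (sqrtC (spectral_diag G 0 j)) ^+ p.

(* ||X||_p^p = max_k Tr((X_k X_k^dagger)^{p/2}) *)
Definition moment (p : nat) (e : 'I_n -> nat) (X : MIdx e -> C) : C :=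
  \big[Num.max/0]_(k < n) trpow_half p (unfold_gram X k).

End Defs.

From HB Require Import structures.
From mathcomp Require Import all_boot all_order all_algebra.
From mathcomp Require Import ring sesquilinear spectral.
Import Order.TTheory GRing.Theory Num.Theory.
Local Open Scope ring_scope.

(* A fully separable state makes both correlation tensors convex combinations
   X = \sum_i p_i u_i^(1) (x) ... (x) u_i^(n) of product tensors whose local
   factors are (rescaled) Bloch vectors of density matrices; Bessel's
   inequality for the orthogonal generators, together with Tr(rho_k^2) <= 1,
   bounds |u_i^(k)|^2 by the constant c_k of the theorem.  Let s_j be the
   singular values of the k-th unfolding of X.  Then \sum_j s_j^2 = |X|^2 for
   every k, (\sum_j s_j^2)^2 <= (\sum_j s_j^3) (\sum_j s_j), and the trace norm
   \sum_j s_j of the unfolding is at most \sum_i p_i \prod_k |u_i^(k)|, hence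
   at most \prod_k sqrt(c_k). *)

Set Implicit Arguments.
Unset Strict Implicit.
Unset Printing Implicit Defensive.

Local Open Scope sesquilinear_scope.

Section FiniteSums.
Context {C : numClosedFieldType}.

Lemma sumr_norm2_ge0 (I : finType) (f : I -> C) : 0 <= \sum_i `|f i| ^+ 2.
Proof. by apply: sumr_ge0 => i _; rewrite exprn_ge0. Qed.

Lemma bessel (I J : finType) (f : J -> I -> C) (y : I -> C) :
  (forall b b', b != b' -> \sum_i f b i * (f b' i)^* = 0) ->
  \sum_b (\sum_i `|f b i| ^+ 2)^-1 * `|\sum_i y i * (f b i)^*| ^+ 2
    <= \sum_i `|y i| ^+ 2.
Proof.
move=> orth.
pose c b := \sum_i `|f b i| ^+ 2.
pose g b := \sum_i y i * (f b i)^*.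
pose t b := g b / c b.
(* s is the orthogonal projection of y on the span of the f b. *)
pose s i := \sum_b t b * f b i.
pose W := \sum_b (c b)^-1 * `|g b| ^+ 2.
have c_real b : (c b)^* = c b by apply/geC0_conj/sumr_norm2_ge0.
have dot_ys : \sum_i y i * (s i)^* = W.
  rewrite /W; under eq_bigr do rewrite rmorph_sum mulr_sumr.
  rewrite exchange_big; apply: eq_bigr => b _.
  rewrite /g /t; under eq_bigr do rewrite rmorphM mulrCA.
  rewrite -mulr_sumr rmorphM /= fmorphV /= c_real normCK.
  by rewrite rmorph_sum /=; ring.
have dot_sy : \sum_i s i * (y i)^* = W.
  rewrite /W /s; under eq_bigr do rewrite mulr_suml.
  rewrite exchange_big; apply: eq_bigr => b _.
  rewrite /g /t; under eq_bigr do rewrite -mulrA.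
  rewrite -mulr_sumr normCK rmorph_sum /=.
  rewrite [X in _ = _ * (_ * X)](eq_bigr (fun i => f b i * (y i)^*)).
    by rewrite /g; ring.
  by move=> i _; rewrite rmorphM /= conjCK mulrC.
have dot_ss : \sum_i s i * (s i)^* = W.
  rewrite /W /s; under eq_bigr do rewrite rmorph_sum mulr_suml.
  rewrite exchange_big; apply: eq_bigr => b _.
  under eq_bigr do rewrite mulr_sumr.
  rewrite exchange_big (bigD1 b) //= [X in _ + X]big1 ?addr0; last first.
    move=> b' b'b.
    transitivity (t b * (t b')^* * \sum_i f b i * (f b' i)^*).
      by rewrite mulr_sumr; apply: eq_bigr => i _; rewrite rmorphM /=; ring.
    by rewrite orth ?mulr0 // eq_sym.
  transitivity (t b * (t b)^* * c b).
    by rewrite /c mulr_sumr; apply: eq_bigr => i _; rewrite rmorphM normCK; ring.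
  rewrite /t rmorphM /= fmorphV /= c_real normCK.
  have [->|cb_neq0] := eqVneq (c b) 0; first by rewrite invr0 !mulr0 mul0r.
  by field.
have : 0 <= \sum_i `|y i - s i| ^+ 2 by apply: sumr_norm2_ge0.
suff -> : \sum_i `|y i - s i| ^+ 2 = \sum_i `|y i| ^+ 2 - W by rewrite subr_ge0.
transitivity (\sum_i (`|y i| ^+ 2 - y i * (s i)^* - s i * (y i)^* + s i * (s i)^*)).
  by apply: eq_bigr => i _; rewrite !normCK rmorphB /=; ring.
by rewrite !big_split /= !sumrN dot_ys dot_sy dot_ss; ring.
Qed.

Lemma cauchy_schwarz (I : finType) (a b : I -> C) :
  `|\sum_i a i * b i| <= sqrtC (\sum_i `|a i| ^+ 2) * sqrtC (\sum_i `|b i| ^+ 2).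
Proof.
have orth (j j' : 'I_1) : j != j' -> \sum_i (b i)^* * ((b i)^*)^* = 0.
  by rewrite !ord1 eqxx.
have := bessel a orth; rewrite big_ord1.
under eq_bigr do rewrite norm_conjC.
under [X in `|X|]eq_bigr do rewrite conjCK.
have [b0|b_neq0] := eqVneq (\sum_i `|b i| ^+ 2) 0.
  move=> _; rewrite big1 ?normr0 ?mulr_ge0 ?sqrtC_ge0 ?sumr_norm2_ge0 // => i _.
  move/psumr_eq0P: b0 => /(_ (fun i _ => exprn_ge0 2 (normr_ge0 (b i)))) /(_ i isT).
  by move/eqP; rewrite expf_eq0 /= normr_eq0 => /eqP ->; rewrite mulr0.
have b_gt0 : 0 < \sum_i `|b i| ^+ 2 by rewrite lt_def b_neq0 sumr_norm2_ge0.
move=> bes; rewrite -(sqrCK (normr_ge0 _)) -sqrtCM ?nnegrE ?sumr_norm2_ge0 //.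
rewrite ler_sqrtC ?nnegrE ?exprn_ge0 ?mulr_ge0 ?sumr_norm2_ge0 //.
by rewrite mulrC -ler_pdivrMl.
Qed.

Lemma sum_norm2_unitary (I J : finType) (P : J -> I -> C) (x : I -> C) :
  (forall a b, \sum_j P j a * (P j b)^* = (a == b)%:R) ->
  \sum_j `|\sum_a P j a * x a| ^+ 2 = \sum_a `|x a| ^+ 2.
Proof.
move=> P_orth.
transitivity (\sum_j \sum_a \sum_b P j a * (P j b)^* * (x a * (x b)^*)).
  apply: eq_bigr => j _; rewrite normCK rmorph_sum mulr_suml.
  apply: eq_bigr => a _; rewrite mulr_sumr; apply: eq_bigr => b _.
  by rewrite rmorphM /=; ring.
rewrite exchange_big; apply: eq_bigr => a _.
rewrite exchange_big (bigD1 a) //= [X in _ + X]big1 ?addr0.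
  by rewrite -mulr_suml P_orth eqxx mul1r normCK.
by move=> b ba; rewrite -mulr_suml P_orth eq_sym (negbTE ba) mul0r.
Qed.

Lemma sqr_sum_expr2_le (I : finType) (s : I -> C) : (forall j, 0 <= s j) ->
  (\sum_j s j ^+ 2) ^+ 2 <= (\sum_j s j ^+ 3) * \sum_j s j.
Proof.
move=> s_ge0.
have sym_ge0 : 0 <= \sum_j \sum_l s j * s l * (s j - s l) ^+ 2.
  apply: sumr_ge0 => j _; apply: sumr_ge0 => l _.
  apply: mulr_ge0; first exact: mulr_ge0.
  by rewrite real_exprn_even_ge0 // rpredB ?ger0_real.
pose A := \sum_j \sum_l (s j ^+ 3 * s l - s j ^+ 2 * s l ^+ 2).
have sym_eq : \sum_j \sum_l s j * s l * (s j - s l) ^+ 2 = A + A.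
  transitivity (\sum_j \sum_l ((s j ^+ 3 * s l - s j ^+ 2 * s l ^+ 2)
                             + (s l ^+ 3 * s j - s l ^+ 2 * s j ^+ 2))).
    by apply: eq_bigr => j _; apply: eq_bigr => l _; ring.
  under eq_bigr do rewrite big_split /=.
  by rewrite big_split /= [X in _ + X]exchange_big.
have A_eq : A = (\sum_j s j ^+ 3) * \sum_j s j - (\sum_j s j ^+ 2) ^+ 2.
  by rewrite expr2 !big_distrlr /= -sumrB; apply: eq_bigr => j _; rewrite -sumrB.
by move: sym_ge0; rewrite sym_eq A_eq -mulr2n pmulrn_lge0 // subr_ge0.
Qed.

Lemma sqrtC_prod (I : finType) (P : pred I) (f : I -> C) : (forall i, 0 <= f i) ->
  sqrtC (\prod_(i | P i) f i) = \prod_(i | P i) sqrtC (f i).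
Proof.
move=> f_ge0.
suff [] : 0 <= \prod_(i | P i) f i /\
          sqrtC (\prod_(i | P i) f i) = \prod_(i | P i) sqrtC (f i) by [].
apply: (big_rec2 (fun a b => 0 <= a /\ sqrtC a = b)); first by rewrite sqrtC1 ler01.
by move=> i a _ _ [a_ge0 <-]; rewrite mulr_ge0 // sqrtCM ?nnegrE.
Qed.

Lemma bigmax_ge0_ub (I : finType) (F : I -> C) k : (forall i, 0 <= F i) ->
  F k <= \big[Num.max/0]_i F i.
Proof.
move=> F_ge0; have cmp (x y : C) : 0 <= x -> 0 <= y -> x >=< y.
  by move=> x_ge0 y_ge0; rewrite real_comparable ?ger0_real.
elim: (index_enum I) (mem_index_enum k) => // i r IHr.
have rest_ge0 : 0 <= \big[Num.max/0]_(j <- r) F j.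
  apply: (big_ind (fun x => 0 <= x)) => // x y x_ge0 y_ge0.
  by rewrite comparable_le_max ?x_ge0 ?cmp.
rewrite big_cons inE comparable_le_max ?cmp //.
by case/orP=> [/eqP -> | /IHr ->]; rewrite ?lexx ?orbT.
Qed.

Lemma bigmax_cst n (x : C) : (0 < n)%N -> 0 <= x -> \big[Num.max/0]_(k < n) x = x.
Proof.
case: n => // n _ x_ge0; rewrite big_const_ord.
elim: n => [|n IHn]; last by rewrite iterS IHn maxxx.
by apply/comparable_max_idPl; rewrite ?real_comparable ?ger0_real.
Qed.

End FiniteSums.

Section GramSpectrum.
Context {C : numClosedFieldType} {r : nat} {I : finType}.
Context {T : 'I_r -> I -> C} {G : 'M[C]_r}.
Hypothesis gramE : forall a b, G a b = \sum_c T a c * (T b c)^*.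

Let P := spectralmx G.
Let mu := spectral_diag G.

Lemma gram_normalmx : G \is normalmx.
Proof.
have hermG : G^t* = G.
  apply/matrixP => a b; rewrite !mxE !gramE rmorph_sum; apply: eq_bigr => c _.
  by rewrite rmorphM /= conjCK mulrC.
by apply/normalmxP; rewrite hermG.
Qed.

Lemma spectral_unitary_cols a b : \sum_j P j a * (P j b)^* = (a == b)%:R.
Proof.
have /unitarymxP PtP : P^t* \is unitarymx by rewrite trmxC_unitary spectral_unitarymx.
have := congr1 (fun M : 'M[C]_r => M b a) PtP; rewrite trmxCK !mxE eq_sym => <-.
by apply: eq_bigr => j _; rewrite !mxE mulrC.
Qed.

Lemma gram_diagonalized : P *m G *m P^t* = diag_mx mu.
Proof.
have /unitarymxP PPt := spectral_unitarymx G.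
rewrite [in LHS](orthomx_spectralP gram_normalmx) invmx_unitary ?spectral_unitarymx //.
by rewrite !mulmxA PPt mul1mx -!mulmxA PPt mulmx1.
Qed.

Definition eigenrow j c := \sum_a P j a * T a c.

Lemma eigenrow_orth j l :
  \sum_c eigenrow j c * (eigenrow l c)^* = (j == l)%:R * mu 0 j.
Proof.
have := congr1 (fun M : 'M[C]_r => M j l) gram_diagonalized.
rewrite [RHS]mxE mulr_natl => <-.
transitivity (\sum_a \sum_b \sum_c P j a * T a c * ((P l b)^* * (T b c)^*)).
  under [RHS]eq_bigr do rewrite exchange_big.
  rewrite [RHS]exchange_big; apply: eq_bigr => c _.
  rewrite /eigenrow mulr_suml; apply: eq_bigr => a _.
  by rewrite rmorph_sum mulr_sumr; apply: eq_bigr => b _; rewrite rmorphM /=; ring.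
rewrite mxE exchange_big; apply: eq_bigr => b _.
rewrite mxE mulr_suml; apply: eq_bigr => a _.
by rewrite !mxE gramE mulr_sumr mulr_suml; apply: eq_bigr => c _; ring.
Qed.

Lemma gram_eigenE j : mu 0 j = \sum_c `|eigenrow j c| ^+ 2.
Proof.
have := eigenrow_orth j j; rewrite eqxx mul1r => <-.
by apply: eq_bigr => c _; rewrite normCK.
Qed.

Lemma gram_eigen_ge0 j : 0 <= mu 0 j.
Proof. by rewrite gram_eigenE sumr_norm2_ge0. Qed.

Lemma gram_sum_eigen : \sum_j mu 0 j = \sum_a \sum_c `|T a c| ^+ 2.
Proof.
under eq_bigr do rewrite gram_eigenE.
rewrite exchange_big [RHS]exchange_big; apply: eq_bigr => c _.
exact: (sum_norm2_unitary (fun a => T a c) spectral_unitary_cols).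
Qed.

(* The left-hand side is the trace norm of T; pair each rank-one term
   p_i x_i y_i^T with the singular vectors of T, then use Cauchy-Schwarz and
   Bessel. *)
Lemma gram_sum_sqrt_eigen_le (m : nat) (p : 'I_m -> C) (x : 'I_m -> 'I_r -> C)
    (y : 'I_m -> I -> C) :
  (forall i, 0 <= p i) -> (forall a c, T a c = \sum_i p i * x i a * y i c) ->
  \sum_j sqrtC (mu 0 j) <=
    \sum_i p i * (sqrtC (\sum_a `|x i a| ^+ 2) * sqrtC (\sum_c `|y i c| ^+ 2)).
Proof.
move=> p_ge0 TE.
pose s j := sqrtC (mu 0 j).
have s_ge0 j : 0 <= s j by rewrite sqrtC_ge0 gram_eigen_ge0.
pose A i j := \sum_a P j a * x i a.
pose B i j := (s j)^-1 * \sum_c y i c * (eigenrow j c)^*.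
pose z i := \sum_j A i j * B i j.
have eigenrowE j c : eigenrow j c = \sum_i p i * A i j * y i c.
  rewrite /eigenrow /A; under eq_bigr do rewrite TE mulr_sumr.
  rewrite exchange_big; apply: eq_bigr => i _.
  by rewrite mulr_sumr mulr_suml; apply: eq_bigr => a _; ring.
have sum_s : \sum_j s j = \sum_i p i * z i.
  transitivity (\sum_j (s j)^-1 * \sum_c eigenrow j c * (eigenrow j c)^*).
    apply: eq_bigr => j _; rewrite eigenrow_orth eqxx mul1r -(sqrtCK (mu 0 j)) -/(s j).
    by have [->|s_neq0] := eqVneq (s j) 0; [rewrite invr0 mul0r | field].
  rewrite /z; under [RHS]eq_bigr do rewrite mulr_sumr.
  rewrite exchange_big; apply: eq_bigr => j _.
  rewrite /B; under [RHS]eq_bigr do rewrite mulr_sumr mulr_sumr mulr_sumr.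
  rewrite exchange_big mulr_sumr; apply: eq_bigr => c _.
  by rewrite eigenrowE !mulr_suml mulr_sumr; apply: eq_bigr => i _; ring.
have z_le i : `|z i| <= sqrtC (\sum_a `|x i a| ^+ 2) * sqrtC (\sum_c `|y i c| ^+ 2).
  apply: le_trans (cauchy_schwarz _ _) _.
  rewrite /A (sum_norm2_unitary (x i) spectral_unitary_cols).
  rewrite ler_wpM2l ?sqrtC_ge0 ?sumr_norm2_ge0 //.
  rewrite ler_sqrtC ?nnegrE ?sumr_norm2_ge0 //.
  have orth j l : j != l -> \sum_c eigenrow j c * (eigenrow l c)^* = 0.
    by move=> jl; rewrite eigenrow_orth (negbTE jl) mul0r.
  apply: le_trans (bessel (y i) orth); rewrite le_eqVlt; apply/orP; left; apply/eqP.
  apply: eq_bigr => j _; rewrite -gram_eigenE -(sqrtCK (mu 0 j)) -/(s j) /B.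
  by rewrite normrM exprMn normfV (ger0_norm (s_ge0 j)) exprVn.
have -> : \sum_j sqrtC (mu 0 j) = `|\sum_i p i * z i|.
  by rewrite -sum_s ger0_norm // sumr_ge0.
apply: le_trans (ler_norm_sum _ _ _) _; apply: ler_sum => i _.
by rewrite normrM (ger0_norm (p_ge0 i)) ler_wpM2l.
Qed.

End GramSpectrum.

Lemma sum_MIdx_prod (R : comNzRingType) n (e : 'I_n -> nat)
    (f : forall j : 'I_n, 'I_(e j) -> R) :
  \sum_(be : MIdx e) \prod_j f j (be j) = \prod_j \sum_(a : 'I_(e j)) f j a.
Proof.
pose T_ := fun j : 'I_n => 'I_(e j).
rewrite (reindex (@dffun_of_fprod _ T_)); last exact/onW_bij/dffun_of_fprod_bij.
pose P_ := fun i => [ffun a : T_ i => f i a].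
transitivity (\sum_(t : fprod T_) \prod_(i in 'I_n) P_ i (t i)).
  by apply: eq_bigr => t _; apply: eq_bigr => i _; rewrite !ffunE.
rewrite big_fprod -(bigA_distr_big_dep (tagged_with T_) (fun i j => untag 0 (P_ i) j)).
apply: eq_bigr => i _.
transitivity (\sum_(a : T_ i) P_ i a); last by apply: eq_bigr => a _; rewrite ffunE.
by rewrite (big_tag (fun i (a : T_ i) => P_ i a) i).
Qed.

Section Unfolding.
Context {C : numClosedFieldType} {n : nat} {e : 'I_n -> nat}.

Definition upd (c : MIdx e) (k : 'I_n) (a : 'I_(e k)) : MIdx e :=
  @finfun _ (fun j => 'I_(e j)) (fun j => if j == k then insubd (c j) (val a) else c j).
Arguments upd c k a : clear implicits.

Lemma upd_at (c : MIdx e) k a : upd c k a k = a.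
Proof. by apply: val_inj; rewrite ffunE eqxx val_insubd ltn_ord. Qed.

Lemma upd_other (c : MIdx e) k a j : j != k -> upd c k a j = c j.
Proof. by move=> /negbTE jk; rewrite ffunE jk. Qed.

Lemma upd_upd (c : MIdx e) k a b : upd (upd c k a) k b = upd c k b.
Proof.
apply/ffunP => j; have [->|jk] := eqVneq j k; first by rewrite !upd_at.
by rewrite !upd_other.
Qed.

Lemma upd_eqE (c c' : MIdx e) k a :
  (upd c k a == c') = (c' k == a) && [forall j, (j != k) ==> (c j == c' j)].
Proof.
apply/eqP/andP => [<- | [/eqP c'k /forallP c_c']].
  split; first by rewrite upd_at.
  by apply/forallP => j; apply/implyP => jk; rewrite upd_other.
apply/ffunP => j; have [->|jk] := eqVneq j k; first by rewrite upd_at c'k.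
by rewrite upd_other //; apply/eqP; have := c_c' j; rewrite jk.
Qed.

Lemma upd_id (c : MIdx e) k a : (upd c k a == c) = (c k == a).
Proof.
rewrite upd_eqE; case: (c k == a) => //=.
by apply/forallP => j; apply/implyP.
Qed.

Lemma reindex_upd (F : MIdx e -> C) k (a a0 : 'I_(e k)) :
  \sum_(be : MIdx e | be k == a) F be = \sum_(c : MIdx e | c k == a0) F (upd c k a).
Proof.
rewrite (reindex_onto (fun c => upd c k a) (fun be => upd be k a0)); last first.
  by move=> be /eqP bek; rewrite upd_upd; apply/eqP; rewrite upd_id bek.
by apply: eq_bigl => c; rewrite upd_at eqxx /= upd_upd upd_id.
Qed.

(* Entry (a, c) of the k-th unfolding of X: the column index, a multi-index of
   the coordinates other than k, is encoded as a full multi-index c with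
   c k = a0, and the entries with c k != a0 are zero. *)
Definition unfolding (X : MIdx e -> C) k (a0 a : 'I_(e k)) (c : MIdx e) : C :=
  if c k == a0 then X (upd c k a) else 0.

Lemma unfold_gram_unfolding (X : MIdx e -> C) k (a0 a b : 'I_(e k)) :
  unfold_gram X k a b = \sum_c unfolding X a0 a c * (unfolding X a0 b c)^*.
Proof.
rewrite mxE.
transitivity (\sum_(be : MIdx e) (if be k == a then X be * (X (upd be k b))^* else 0)).
  apply: eq_bigr => be _.
  have [bek|bek] := eqVneq (be k) a; last first.
    by rewrite big1 // => ga _; rewrite (negbTE bek).
  rewrite -big_mkcond /= (big_pred1 (upd be k b)) // => ga.
  by rewrite /pred1 /= [RHS]eq_sym upd_eqE [ga k == b]eq_sym.
rewrite -big_mkcond (reindex_upd _ a a0) big_mkcond; apply: eq_bigr => c _.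
by rewrite /unfolding; case: (c k == a0); rewrite ?upd_upd ?mul0r.
Qed.

Lemma unfolding_norm2 (X : MIdx e -> C) k (a0 : 'I_(e k)) :
  \sum_a \sum_c `|unfolding X a0 a c| ^+ 2 = \sum_be `|X be| ^+ 2.
Proof.
transitivity (\sum_(a : 'I_(e k)) \sum_(be : MIdx e | be k == a) `|X be| ^+ 2).
  apply: eq_bigr => a _; rewrite (reindex_upd _ a a0) [RHS]big_mkcond.
  apply: eq_bigr => c _; rewrite /unfolding.
  by case: (c k == a0); rewrite ?normr0 ?expr0n.
under eq_bigr do rewrite big_mkcond.
rewrite exchange_big; apply: eq_bigr => be _.
by rewrite -big_mkcond /= (big_pred1 (be k)) // => a; rewrite eq_sym.
Qed.

Lemma unfold_gram_eigen_ge0 (X : MIdx e -> C) k (a0 : 'I_(e k)) j :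
  0 <= spectral_diag (unfold_gram X k) 0 j.
Proof. exact: (gram_eigen_ge0 (unfold_gram_unfolding X a0)). Qed.

Lemma trpow_half2_unfold_gram (X : MIdx e -> C) k (a0 : 'I_(e k)) :
  trpow_half 2 (unfold_gram X k) = \sum_be `|X be| ^+ 2.
Proof.
rewrite /trpow_half; under eq_bigr do rewrite sqrtCK.
by rewrite (gram_sum_eigen (unfold_gram_unfolding X a0)) unfolding_norm2.
Qed.

Context {m : nat} (u : 'I_m -> forall j : 'I_n, 'I_(e j) -> C).
Arguments u : clear implicits.

Definition others_prod k (a0 : 'I_(e k)) i (c : MIdx e) : C :=
  if c k == a0 then \prod_(j | j != k) u i j (c j) else 0.

Lemma unfolding_prod_sum (p : 'I_m -> C) (X : MIdx e -> C) k (a0 a : 'I_(e k)) c :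
  (forall be, X be = \sum_i p i * \prod_j u i j (be j)) ->
  unfolding X a0 a c = \sum_i p i * u i k a * others_prod a0 i c.
Proof.
move=> XE; rewrite /unfolding /others_prod; case: (c k == a0); last first.
  by rewrite big1 // => i _; rewrite mulr0.
rewrite XE; apply: eq_bigr => i _; rewrite (bigD1 k) //= upd_at mulrA.
by congr (_ * _); apply: eq_bigr => j jk; rewrite upd_other.
Qed.

Lemma others_prod_norm2 k (a0 : 'I_(e k)) i :
  \sum_c `|others_prod a0 i c| ^+ 2 = \prod_(j | j != k) \sum_b `|u i j b| ^+ 2.
Proof.
pose h j (b : 'I_(e j)) : C :=
  if j == k then (val b == val a0)%:R else `|u i j b| ^+ 2.
transitivity (\sum_(c : MIdx e) \prod_j h j (c j)).
  apply: eq_bigr => c _; rewrite (bigD1 k) //= /h eqxx val_eqE /others_prod.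
  case: (c k == a0); last by rewrite normr0 expr0n mul0r.
  rewrite mul1r normr_prod -prodrXl; apply: eq_bigr => j jk.
  by rewrite (negbTE jk).
rewrite sum_MIdx_prod (bigD1 k) //= /h eqxx.
rewrite (bigD1 a0) //= eqxx big1 ?addr0 ?mul1r.
  by apply: eq_bigr => j jk; rewrite (negbTE jk).
by move=> b /negbTE; rewrite -val_eqE => ->.
Qed.

End Unfolding.

Section TracePowers.
Context {C : numClosedFieldType} {r : nat} {G : 'M[C]_r}.
Hypothesis eigen_ge0 : forall j, 0 <= spectral_diag G 0 j.

Lemma trpow_half_ge0 q : 0 <= trpow_half q G.
Proof. by apply: sumr_ge0 => j _; rewrite exprn_ge0 // sqrtC_ge0. Qed.

Lemma trpow_half2_sqr_le : trpow_half 2 G ^+ 2 <= trpow_half 3 G * trpow_half 1 G.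
Proof.
rewrite [trpow_half 1 G](eq_bigr _ (fun j _ => expr1 _)).
by apply: sqr_sum_expr2_le => j; rewrite sqrtC_ge0.
Qed.

End TracePowers.

Section MomentBound.
Context {C : numClosedFieldType} {n : nat} {e : 'I_n -> nat}.
Context {m : nat} (p : 'I_m -> C) (u : 'I_m -> forall j : 'I_n, 'I_(e j) -> C).
Arguments u : clear implicits.
Variables (X : MIdx e -> C) (c : 'I_n -> C).
Hypotheses (p_ge0 : forall i, 0 <= p i) (p_sum1 : \sum_i p i = 1).
Hypothesis XE : forall be, X be = \sum_i p i * \prod_j u i j (be j).
Hypothesis u_norm2_le : forall i j, \sum_b `|u i j b| ^+ 2 <= c j.

Let c_ge0 j : 0 <= c j.
Proof.
case: (pickP (fun _ : 'I_m => true)) => [i _ | no_index].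
  exact: le_trans (sumr_norm2_ge0 _) (u_norm2_le i j).
move: p_sum1; rewrite big1 => [/eqP | i _]; last by have := no_index i.
by rewrite eq_sym oner_eq0.
Qed.

Lemma trpow_half1_unfold_gram_le k (a0 : 'I_(e k)) :
  trpow_half 1 (unfold_gram X k) <= \prod_j sqrtC (c j).
Proof.
rewrite [trpow_half 1 _](eq_bigr _ (fun j _ => expr1 _)).
have unfoldingE a c' := unfolding_prod_sum a0 a c' XE.
apply: le_trans (gram_sum_sqrt_eigen_le (unfold_gram_unfolding X a0) p_ge0 unfoldingE) _.
apply: (@le_trans _ _ (\sum_i p i * \prod_j sqrtC (c j))); last first.
  by rewrite -mulr_suml p_sum1 mul1r.
apply: ler_sum => i _; apply: ler_wpM2l => //.
have norm2_ge0 j : 0 <= \sum_(b : 'I_(e j)) `|u i j b| ^+ 2 by apply: sumr_norm2_ge0.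
rewrite others_prod_norm2 -sqrtCM ?nnegrE ?sumr_norm2_ge0 ?prodr_ge0 //.
rewrite -(@bigD1 _ _ _ _ k predT (fun j => \sum_(b : 'I_(e j)) `|u i j b| ^+ 2)) //.
rewrite sqrtC_prod //.
apply: ler_prod => j _; rewrite sqrtC_ge0 norm2_ge0 /=.
by rewrite ler_sqrtC ?nnegrE ?norm2_ge0 ?c_ge0 ?u_norm2_le.
Qed.

Lemma moment2_sqr_le : (0 < n)%N -> (forall k, 0 < e k)%N ->
  moment 2 X ^+ 2 <= moment 3 X * \prod_j sqrtC (c j).
Proof.
move=> n_gt0 e_gt0; pose a0 k : 'I_(e k) := Ordinal (e_gt0 k).
pose k0 : 'I_n := Ordinal n_gt0.
have eigen_ge0 k := unfold_gram_eigen_ge0 X (a0 k).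
have -> : moment 2 X = trpow_half 2 (unfold_gram X k0).
  rewrite /moment; under eq_bigr do rewrite (trpow_half2_unfold_gram X (a0 _)).
  by rewrite bigmax_cst ?sumr_norm2_ge0 // (trpow_half2_unfold_gram X (a0 k0)).
apply: le_trans (trpow_half2_sqr_le (eigen_ge0 k0)) _.
rewrite ler_pM ?trpow_half_ge0 ?trpow_half1_unfold_gram_le //.
apply: (@bigmax_ge0_ub _ _ (fun k => trpow_half 3 (unfold_gram X k))) => k.
exact: trpow_half_ge0.
Qed.

End MomentBound.

Lemma sum_ord_split0 (V : nmodType) (N : nat) (F : nat -> V) : (0 < N)%N ->
  \sum_(a < N) F a = F 0%N + \sum_(a < N - 1) F a.+1.
Proof.
by move=> N_gt0; rewrite -(big_mkord xpredT F) big_ltn // big_add1 big_mkord subn1.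
Qed.

Section DensityMatrices.
Context {C : numClosedFieldType}.

Lemma sum_bas n (d : 'I_n -> nat) (F : MIdx d -> C) :
  \sum_(i < dimH d) F (bas i) = \sum_be F be.
Proof. by rewrite /bas /dimH -big_enum_val. Qed.

Lemma mxtrace_tens n (d : 'I_n -> nat) (A B : forall k : 'I_n, 'M[C]_(d k)) :
  \tr (tens A *m tens B) = \prod_k \tr (A k *m B k).
Proof.
pose G (be ga : MIdx d) := \prod_k (A k (be k) (ga k) * B k (ga k) (be k)).
transitivity (\sum_(be : MIdx d) \sum_(ga : MIdx d) G be ga).
  rewrite /mxtrace -(sum_bas (fun be => \sum_ga G be ga)); apply: eq_bigr => i _.
  rewrite mxE -(sum_bas (G (bas i))).
  by apply: eq_bigr => l _; rewrite !mxE /G big_split.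
rewrite /G; under [LHS]eq_bigr => be _ do
  rewrite (sum_MIdx_prod (fun k (b : 'I_(d k)) => A k (be k) b * B k b (be k))).
rewrite (sum_MIdx_prod (fun k (a : 'I_(d k)) => \sum_b A k a b * B k b a)).
by apply: eq_bigr => k _; apply: eq_bigr => a _; rewrite mxE.
Qed.

Lemma mxtrace_mulmx_herm m (A B : 'M[C]_m) : adj B = B ->
  \sum_x \sum_y A x y * (B x y)^* = \tr (A *m B).
Proof.
move=> B_herm; apply: eq_bigr => x _; rewrite mxE; apply: eq_bigr => y _.
by rewrite -{2}B_herm !mxE.
Qed.

Lemma qform_mxE m (A : 'M[C]_m) (v : 'rV[C]_m) :
  (v *m A *m adj v) 0 0 = \sum_a \sum_b v 0 a * A a b * (v 0 b)^*.
Proof.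
rewrite mxE; under eq_bigr do rewrite mxE mulr_suml.
rewrite exchange_big; apply: eq_bigr => a _; apply: eq_bigr => b _.
by rewrite !mxE.
Qed.

Lemma sum_mul_delta2 m (F : 'I_m -> C) x y al be :
  \sum_b F b * (al * (b == x)%:R + be * (b == y)%:R) = F x * al + F y * be.
Proof.
under eq_bigr do rewrite mulrDr.
rewrite big_split /=; congr (_ + _).
  by rewrite (bigD1 x) //= eqxx mulr1 big1 ?addr0 // => b /negbTE->; rewrite !mulr0.
by rewrite (bigD1 y) //= eqxx mulr1 big1 ?addr0 // => b /negbTE->; rewrite !mulr0.
Qed.

Lemma psd_qform2 m (A : 'M[C]_m) x y al be : psd A ->
  0 <= al * A x x * al^* + al * A x y * be^* + be * A y x * al^* + be * A y y * be^*.
Proof.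
pose v a := al * (a == x)%:R + be * (a == y)%:R.
case=> _ /(_ (\row_a v a)); rewrite qform_mxE.
have rowE a : \sum_b (\row_a' v a') 0 a * A a b * ((\row_a' v a') 0 b)^* =
              (A a x * al^* + A a y * be^*) * v a.
  transitivity (v a * \sum_b A a b * (al^* * (b == x)%:R + be^* * (b == y)%:R)).
    rewrite mulr_sumr; apply: eq_bigr => b _; rewrite !mxE /v.
    by rewrite rmorphD !rmorphM /= !rmorph_nat; ring.
  by rewrite sum_mul_delta2 mulrC.
rewrite (eq_bigr _ (fun a _ => rowE a)) sum_mul_delta2 => /le_trans; apply.
by rewrite le_eqVlt; apply/orP; left; apply/eqP; ring.
Qed.

Lemma psd_diag_ge0 m (A : 'M[C]_m) x : psd A -> 0 <= A x x.
Proof.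
move=> /(psd_qform2 x x 1 0).
by rewrite conjC0 conjC1 !mul0r !mulr0 !addr0 mul1r mulr1.
Qed.

Lemma psd_minor2 m (A : 'M[C]_m) x y : psd A -> `|A x y| ^+ 2 <= A x x * A y y.
Proof.
move=> A_psd.
have A_herm x' y' : A y' x' = (A x' y')^*.
  by case: A_psd => A_adj _; rewrite -{1}A_adj !mxE.
have A_diag_real x' : (A x' x')^* = A x' x' by apply/geC0_conj/psd_diag_ge0.
have minor_le x' y' : 0 < A y' y' -> `|A x' y'| ^+ 2 <= A x' x' * A y' y'.
  move=> yy_gt0; have := psd_qform2 x' y' (A y' y') (- A x' y') A_psd.
  rewrite (A_herm x' y') A_diag_real rmorphN /=.
  rewrite (_ : _ + _ = A y' y' * (A x' x' * A y' y' - `|A x' y'| ^+ 2)).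
    by rewrite pmulr_rge0 // subr_ge0.
  by rewrite normCK; ring.
have [yy_gt0 | ] := boolP (0 < A y y); first exact: minor_le.
rewrite lt_def psd_diag_ge0 // andbT negbK => /eqP yy0.
have [xx_gt0 | ] := boolP (0 < A x x).
  by rewrite mulrC -norm_conjC -A_herm minor_le.
rewrite lt_def psd_diag_ge0 // andbT negbK => /eqP xx0.
have := psd_qform2 x y 1 (- A x y) A_psd.
rewrite (A_herm x y) xx0 yy0 (_ : _ + _ = - (`|A x y| ^+ 2 *+ 2)); last first.
  by rewrite normCK; ring.
by rewrite oppr_ge0 pmulrn_lle0 // mulr0.
Qed.

Lemma density_norm2_le1 m (A : 'M[C]_m) :
  density A -> \sum_x \sum_y `|A x y| ^+ 2 <= 1.
Proof.
case=> A_psd A_tr1.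
apply: (@le_trans _ _ (\sum_x \sum_y A x x * A y y)).
  by apply: ler_sum => x _; apply: ler_sum => y _; apply: psd_minor2.
by rewrite -big_distrlr /= -/(\tr A) A_tr1 mulr1.
Qed.

Lemma bessel_mxtrace m (J : finType) (B : J -> 'M[C]_m) (A : 'M[C]_m) :
  (forall b, adj (B b) = B b) -> (forall b b', b != b' -> \tr (B b *m B b') = 0) ->
  \sum_b (\tr (B b *m B b))^-1 * `|\tr (A *m B b)| ^+ 2 <= \sum_x \sum_y `|A x y| ^+ 2.
Proof.
move=> B_herm B_orth.
pose vec (M : 'M[C]_m) (xy : 'I_m * 'I_m) : C := M xy.1 xy.2.
have dotE M b : \sum_xy vec M xy * (vec (B b) xy)^* = \tr (M *m B b).
  by rewrite -(pair_bigA _ (fun x y => M x y * (B b x y)^*)) mxtrace_mulmx_herm.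
have orth b b' : b != b' -> \sum_xy vec (B b) xy * (vec (B b') xy)^* = 0.
  by move=> bb'; rewrite dotE B_orth.
rewrite (pair_bigA _ (fun x y => `|A x y| ^+ 2)).
apply: le_trans (bessel (vec A) orth); rewrite le_eqVlt; apply/orP; left; apply/eqP.
apply: eq_bigr => b _.
rewrite dotE -(dotE (B b)); congr (_^-1 * _).
by apply: eq_bigr => xy _; rewrite normCK.
Qed.

End DensityMatrices.

Section BlochVectors.
Context {C : numClosedFieldType} {d : nat} {L : nat -> 'M[C]_d}.
Hypothesis L_gen : su_generators L.

Lemma su_generators_herm b : (b < d ^ 2)%N -> adj (L b) = L b.
Proof.
case: L_gen => L0 [L_herm _]; case: b => [|b] b_lt; last by case: (L_herm b.+1 b_lt).
by rewrite L0; apply/matrixP => x y; rewrite !mxE rmorph_nat eq_sym.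
Qed.

Lemma su_generators_mxtrace b b' : (b < d ^ 2)%N -> (b' < d ^ 2)%N ->
  \tr (L b *m L b') = (b == b')%:R * (if b == 0%N then d%:R else 2).
Proof.
case: L_gen => L0 [L_herm L_orth].
case: b => [|b]; case: b' => [|b'] b_lt b'_lt.
- by rewrite L0 mulmx1 mxtrace1 mul1r.
- by rewrite L0 mul1mx mul0r; case: (L_herm b'.+1 b'_lt).
- by rewrite L0 mulmx1 mul0r; case: (L_herm b.+1 b_lt).
- by rewrite L_orth // mulr_natr.
Qed.

Lemma bloch_norm2_le (A : 'M[C]_d) : (0 < d)%N -> density A ->
  d%:R^-1 * `|\tr A| ^+ 2 + 2^-1 * \sum_(a < d ^ 2 - 1) `|\tr (A *m L a.+1)| ^+ 2 <= 1.
Proof.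
move=> d_gt0 A_dens.
have herm (b : 'I_(d ^ 2)) : adj (L b) = L b by apply: su_generators_herm.
have orth (b b' : 'I_(d ^ 2)) : b != b' -> \tr (L b *m L b') = 0.
  by move=> bb'; rewrite su_generators_mxtrace // val_eqE (negbTE bb') mul0r.
apply: le_trans (density_norm2_le1 A_dens).
apply: le_trans (bessel_mxtrace A herm orth).
rewrite le_eqVlt; apply/orP; left; apply/eqP.
rewrite (sum_ord_split0 (fun b => (\tr (L b *m L b))^-1 * `|\tr (A *m L b)| ^+ 2));
  last by rewrite expn_gt0 d_gt0.
case: L_gen => L0 _; rewrite L0 !mulmx1 mxtrace1 mulr_sumr; congr (_ + _).
apply: eq_bigr => a _.
have a_lt : (a.+1 < d ^ 2)%N by move: (ltn_ord a); rewrite ltn_subRL add1n.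
by rewrite su_generators_mxtrace ?eqxx ?mul1r.
Qed.

Lemma corr_local_norm2_le (A : 'M[C]_d) : (0 < d)%N -> density A ->
  \sum_(a < d ^ 2 - 1) `|2^-1 * \tr (A *m L a.+1)| ^+ 2 <= (d%:R - 1) / (2 * d%:R).
Proof.
move=> d_gt0 A_dens; have := bloch_norm2_le d_gt0 A_dens.
have d_neq0 : (d%:R : C) != 0 by rewrite pnatr_eq0 -lt0n.
have half_ge0 : 0 <= (2 : C)^-1 by rewrite invr_ge0 ler0n.
case: A_dens => _ ->; rewrite normr1 expr1n mulr1 addrC -lerBrDr => bloch.
have -> : \sum_(a < d ^ 2 - 1) `|2^-1 * \tr (A *m L a.+1)| ^+ 2 =
          2^-1 * (2^-1 * \sum_(a < d ^ 2 - 1) `|\tr (A *m L a.+1)| ^+ 2).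
  rewrite !mulr_sumr; apply: eq_bigr => a _.
  by rewrite normrM exprMn (ger0_norm half_ge0) mulrA expr2.
apply: le_trans (ler_wpM2l half_ge0 bloch) _.
by rewrite le_eqVlt; apply/orP; left; apply/eqP; field.
Qed.

Lemma canon_local_norm2_le (A : 'M[C]_d) : (0 < d)%N -> density A ->
  \sum_(a < d ^ 2) `|(if a != 0%N :> nat then 2^-1 else d%:R^-1) * \tr (A *m L a)| ^+ 2
    <= (d%:R ^+ 2 - d%:R + 2) / (2 * d%:R ^+ 2).
Proof.
move=> d_gt0 A_dens; have := corr_local_norm2_le d_gt0 A_dens.
have d_neq0 : (d%:R : C) != 0 by rewrite pnatr_eq0 -lt0n.
pose w a : C := if a != 0%N then 2^-1 else d%:R^-1.
rewrite (sum_ord_split0 (fun a => `|w a * \tr (A *m L a)| ^+ 2)) /w;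
  last by rewrite expn_gt0 d_gt0.
case: L_gen => L0 _; case: A_dens => _ A_tr1.
rewrite /= L0 mulmx1 A_tr1 mulr1 normfV normr_nat => corr_le.
apply: le_trans (lerD (lexx _) corr_le) _.
by rewrite le_eqVlt; apply/orP; left; apply/eqP; field.
Qed.

End BlochVectors.

Lemma prod_cond_div (F : fieldType) (I : finType) (P : pred I) (x : I -> F) (y : F) :
  y != 0 -> (forall k, x k != 0) ->
  (\prod_(k | P k) x k) / (y ^+ #|P| * \prod_k x k) =
    \prod_k (if P k then y^-1 else (x k)^-1).
Proof.
move=> y_neq0 x_neq0.
set xP := \prod_(k | P k) x k; set xN := \prod_(k | ~~ P k) x k.
have xP_neq0 : xP != 0 by apply/prodf_neq0 => k _.
have xN_neq0 : xN != 0 by apply/prodf_neq0 => k _.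
rewrite (bigID P) [in RHS](bigID P) /= -/xP -/xN.
rewrite (eq_bigr (fun=> y^-1)) => [|k ->] //; rewrite prodr_const -/(#|P|).
rewrite (eq_bigr (fun k => (x k)^-1)) => [|k /negbTE ->] //; rewrite prodfV -/xN exprVn.
by field; rewrite xP_neq0 xN_neq0 expf_neq0.
Qed.

Section SeparableStates.
Context {C : numClosedFieldType} {n : nat} {d : 'I_n -> nat} {m : nat}.
Variables (L : forall k : 'I_n, nat -> 'M[C]_(d k)) (p : 'I_m -> C).
Variables (sig : 'I_m -> forall k : 'I_n, 'M[C]_(d k)) (rho : 'M[C]_(dimH d)).
Hypothesis rhoE : rho = \sum_i p i *: tens (sig i).

Lemma mxtrace_sep (A : forall k : 'I_n, 'M[C]_(d k)) :
  \tr (rho *m tens A) = \sum_i p i * \prod_k \tr (sig i k *m A k).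
Proof.
rewrite rhoE mulmx_suml raddf_sum /=; apply: eq_bigr => i _.
by rewrite -scalemxAl mxtraceZ mxtrace_tens.
Qed.

Lemma corr_sep al :
  corr L rho al = \sum_i p i * \prod_k (2^-1 * \tr (sig i k *m L k (al k).+1)).
Proof.
rewrite /corr mxtrace_sep mulr_sumr; apply: eq_bigr => i _.
by rewrite big_split /= prodr_const card_ord exprVn mulrCA.
Qed.

Lemma canon_corr_sep : (forall k, 0 < d k)%N -> forall al,
  canon_corr L rho al = \sum_i p i * \prod_k
    ((if val (al k) != 0%N then 2^-1 else (d k)%:R^-1) *
     \tr (sig i k *m L k (val (al k)))).
Proof.
move=> d_gt0 al; rewrite /canon_corr prod_cond_div ?pnatr_eq0 //; last first.
  by move=> k; rewrite pnatr_eq0 -lt0n.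
by rewrite mxtrace_sep mulr_sumr; apply: eq_bigr => i _; rewrite big_split /= mulrCA.
Qed.

End SeparableStates.

Unset Implicit Arguments.

Theorem theorem3 (C : numClosedFieldType) (n : nat) (d : 'I_n -> nat)
  (L : forall k : 'I_n, nat -> 'M[C]_(d k)) (rho : 'M[C]_(dimH d)) :
  (2 <= n)%N -> (forall k, 2 <= d k)%N ->
  (forall k, su_generators (L k)) ->
  fully_separable rho ->
  let abar p := moment p (corr L rho) in
  let bbar p := moment p (canon_corr L rho) in
  abar 2%N ^+ 2 <=
    abar 3%N * \prod_(k < n) sqrtC (((d k)%:R - 1) / (2 * (d k)%:R))
  /\
  bbar 2%N ^+ 2 <=
    bbar 3%N * \prod_(k < n)
      sqrtC (((d k)%:R ^+ 2 - (d k)%:R + 2) / (2 * (d k)%:R ^+ 2)).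
Proof.
move=> n_ge2 d_ge2 L_gen [m [p [sig [p_ge0 p_sum1 sig_dens rhoE]]]] abar bbar.
have n_gt0 : (0 < n)%N by apply: leq_trans n_ge2.
have d_gt0 k : (0 < d k)%N by apply: leq_trans (d_ge2 k).
split.
  pose u i j (a : 'I_(d j ^ 2 - 1)) := 2^-1 * \tr (sig i j *m L j a.+1).
  apply: (moment2_sqr_le (u := u) p_ge0 p_sum1) => //.
  - by move=> al; rewrite (corr_sep L rhoE).
  - by move=> i j; have := corr_local_norm2_le (L_gen j) (d_gt0 j) (sig_dens i j).
  - by move=> k; rewrite subn_gt0 -{1}(exp1n 2) ltn_exp2r.
pose u i j (a : 'I_(d j ^ 2)) :=
  (if val a != 0%N then 2^-1 else (d j)%:R^-1) * \tr (sig i j *m L j a).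
apply: (moment2_sqr_le (u := u) p_ge0 p_sum1) => //.
- by move=> al; rewrite (canon_corr_sep L rhoE d_gt0).
- by move=> i j; have := canon_local_norm2_le (L_gen j) (d_gt0 j) (sig_dens i j).
- by move=> k; rewrite expn_gt0 d_gt0.
Qed.
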